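(* Let $f:\mathcal{C}\to\mathcal{D}$ be a morphism of codes. If $\mathcal{C}$ is intersection complete, then $f(\mathcal{C})$ is intersection complete. If $\mathcal{C}$ is max-intersection complete, then $f(\mathcal{C})$ is max-intersection complete.
   Context: A code is a subset $\mathcal{C}\subseteq 2^{[n]}$. For $\sigma\subseteq[n]$, $\mathrm{Tk}_{\mathcal{C}}(\sigma)=\{c\in\mathcal{C}\mid\sigma\subseteq c\}$; a trunk in $\mathcal{C}$ is a subset that is empty or of the form $\mathrm{Tk}_{\mathcal{C}}(\sigma)$. A function $f:\mathcal{C}\to\mathcal{D}$ between codes is a morphism if the preimage of every trunk in $\mathcal{D}$ is a trunk in $\mathcal{C}$. A code is intersection complete if $c_1\cap c_2\in\mathcal{C}$ for all $c_1,c_2\in\mathcal{C}$. A code is max-intersection complete if the intersection of any nonempty collection of maximal (under inclusion) codewords of $\mathcal{C}$ belongs to $\mathcal{C}$. *)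

From mathcomp Require Import all_boot.
Set Implicit Arguments. Unset Strict Implicit. Unset Printing Implicit Defensive.

Definition trunk_of (n : nat) (C : {set {set 'I_n}}) (sigma : {set 'I_n})
  : {set {set 'I_n}} := [set c in C | sigma \subset c].

Definition is_trunk (n : nat) (C : {set {set 'I_n}}) (T : {set {set 'I_n}}) : Prop :=
  T = set0 \/ exists sigma : {set 'I_n}, T = trunk_of C sigma.

(* f : C -> D is represented by a total function on {set 'I_n} mapping C into D;
   only its values on C matter. *)
Definition maps_into (n m : nat) (C : {set {set 'I_n}}) (D : {set {set 'I_m}})
  (f : {set 'I_n} -> {set 'I_m}) : Prop :=
  forall c, c \in C -> f c \in D.

Definition code_preim (n m : nat) (C : {set {set 'I_n}})
  (f : {set 'I_n} -> {set 'I_m}) (T : {set {set 'I_m}}) : {set {set 'I_n}} :=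
  [set c in C | f c \in T].

Definition is_code_morphism (n m : nat) (C : {set {set 'I_n}}) (D : {set {set 'I_m}})
  (f : {set 'I_n} -> {set 'I_m}) : Prop :=
  maps_into C D f /\
  forall T : {set {set 'I_m}}, T \subset D -> is_trunk D T -> is_trunk C (code_preim C f T).

Definition code_image (n m : nat) (C : {set {set 'I_n}})
  (f : {set 'I_n} -> {set 'I_m}) : {set {set 'I_m}} := f @: C.

Definition intersection_complete (n : nat) (C : {set {set 'I_n}}) : Prop :=
  forall c1 c2, c1 \in C -> c2 \in C -> c1 :&: c2 \in C.

Definition max_codeword (n : nat) (C : {set {set 'I_n}}) (c : {set 'I_n}) : Prop :=
  c \in C /\ forall c', c' \in C -> c \subset c' -> c' = c.

Definition max_intersection_complete (n : nat) (C : {set {set 'I_n}}) : Prop :=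
  forall S : {set {set 'I_n}}, S != set0 ->
    (forall c, c \in S -> max_codeword C c) ->
    \bigcap_(c in S) c \in C.

(** A code morphism [f] sends the intersection of any nonempty family [A] of
    codewords to the intersection of the images, as soon as [\bigcap A] is
    itself a codeword.  Indeed the preimage of the trunk of [\bigcap_(c in A) f c]
    contains [A], so it is a nonempty trunk [Tk_C(tau)]; then [tau] lies in
    every member of [A], hence in [\bigcap A], which is therefore in the
    preimage.  Taking [A] a pair gives the first claim.  For the second, every
    maximal codeword of [f(C)] is the image of a maximal codeword of [C],
    because [f] is monotone. *)
From mathcomp Require Import all_boot.
Set Implicit Arguments. Unset Strict Implicit. Unset Printing Implicit Defensive.

Lemma bigcap_set2 (T I : finType) (F : I -> {set T}) (a b : I) :
  \bigcap_(i in [set a; b]) F i = F a :&: F b.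
Proof. by rewrite bigcap_setU !big_set1. Qed.

Lemma bigcap_imset (T I J : finType) (F : I -> J) (G : J -> {set T}) (A : {set I}) :
  \bigcap_(j in F @: A) G j = \bigcap_(i in A) G (F i).
Proof.
apply/eqP; rewrite eqEsubset; apply/andP; split.
- by apply/bigcapsP=> i iA; apply: bigcap_inf; apply: imset_f.
- by apply/bigcapsP=> _ /imsetP[i iA ->]; apply: bigcap_inf.
Qed.

Lemma max_codeword_maxset (n : nat) (C : {set {set 'I_n}}) (c : {set 'I_n}) :
  max_codeword C c <-> maxset [pred c in C] c.
Proof. by split=> [[cC cmax] | /maxsetP//]; apply/maxsetP. Qed.

Section CodeMorphism.

Variables (n m : nat) (C : {set {set 'I_n}}) (D : {set {set 'I_m}}).
Variable f : {set 'I_n} -> {set 'I_m}.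
Hypothesis f_morph : is_code_morphism C D f.

Lemma morphism_bigcap_sub (A : {set {set 'I_n}}) (x : {set 'I_n}) :
  A \subset C -> A != set0 -> x \in C -> \bigcap_(c in A) c \subset x ->
  \bigcap_(c in A) f c \subset f x.
Proof.
case: f_morph => f_into f_trunk AC /set0Pn[c0 c0A] xC Ax.
set sigma := \bigcap_(c in A) f c.
have trunkD : trunk_of D sigma \subset D.
  by apply/subsetP=> d; rewrite inE => /andP[].
have A_preim c : c \in A -> c \in code_preim C f (trunk_of D sigma).
  move=> cA; have cC := subsetP AC c cA.
  by rewrite !inE cC f_into //=; apply: bigcap_inf.
have [preim0 | [tau preimE]] := f_trunk _ trunkD (or_intror (ex_intro _ sigma erefl)).
  by have := A_preim c0 c0A; rewrite preim0 inE.
have tauA : tau \subset \bigcap_(c in A) c.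
  by apply/bigcapsP=> c /A_preim; rewrite preimE inE => /andP[].
have : x \in code_preim C f (trunk_of D sigma).
  by rewrite preimE inE xC (subset_trans tauA Ax).
by rewrite !inE => /andP[_ /andP[]].
Qed.

Lemma morphism_mono (c c' : {set 'I_n}) :
  c \in C -> c' \in C -> c \subset c' -> f c \subset f c'.
Proof.
move=> cC c'C cc'; have := @morphism_bigcap_sub [set c] c'.
rewrite !big_set1 sub1set; apply=> //.
by apply/set0Pn; exists c; rewrite inE.
Qed.

Lemma morphism_bigcap (A : {set {set 'I_n}}) :
  A \subset C -> A != set0 -> \bigcap_(c in A) c \in C ->
  f (\bigcap_(c in A) c) = \bigcap_(c in A) f c.
Proof.
move=> AC A0 capC; apply/eqP; rewrite eqEsubset morphism_bigcap_sub // andbT.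
apply/bigcapsP=> c cA; apply: morphism_mono => //; first exact: (subsetP AC).
exact: bigcap_inf.
Qed.

Lemma morphism_setI (c1 c2 : {set 'I_n}) :
  c1 \in C -> c2 \in C -> c1 :&: c2 \in C -> f (c1 :&: c2) = f c1 :&: f c2.
Proof.
move=> c1C c2C c12C; have := @morphism_bigcap [set c1; c2].
rewrite !bigcap_set2; apply=> //.
- by apply/subsetP=> c; rewrite !inE => /orP[] /eqP->.
- by apply/set0Pn; exists c1; rewrite !inE eqxx.
Qed.

Lemma max_codeword_image (d : {set 'I_m}) :
  max_codeword (code_image C f) d -> exists2 c, maxset [pred c in C] c & f c = d.
Proof.
case=> /imsetP[c0 c0C ->] dmax.
have [c cmax c0c] := maxset_exists c0C.
exists c => //; have cC : c \in C := maxsetp cmax.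
by apply: dmax; [apply: imset_f | apply: morphism_mono].
Qed.

Lemma image_intersection_complete :
  intersection_complete C -> intersection_complete (code_image C f).
Proof.
move=> Cic _ _ /imsetP[c1 c1C ->] /imsetP[c2 c2C ->].
by rewrite -morphism_setI ?Cic //; apply: imset_f; apply: Cic.
Qed.

Lemma image_max_intersection_complete :
  max_intersection_complete C -> max_intersection_complete (code_image C f).
Proof.
move=> Cmic S S0 Smax.
set T := [set c | maxset [pred c in C] c & f c \in S].
have TC : T \subset C by apply/subsetP=> c; rewrite inE => /andP[/maxsetp].
have fT : f @: T = S.
  apply/eqP; rewrite eqEsubset; apply/andP; split.
  - by apply/subsetP=> _ /imsetP[c + ->]; rewrite inE => /andP[].
  - apply/subsetP=> d dS; have [c cmax fcd] := max_codeword_image (Smax d dS).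
    by apply/imsetP; exists c; rewrite // inE cmax fcd dS.
have T0 : T != set0 by rewrite -(imset_eq0 f) fT.
have capC : \bigcap_(c in T) c \in C.
  by apply: Cmic => // c; rewrite inE => /andP[/max_codeword_maxset].
by rewrite -fT bigcap_imset -morphism_bigcap //; apply: imset_f.
Qed.

End CodeMorphism.

Theorem theorem1p3 (n m : nat) (C : {set {set 'I_n}}) (D : {set {set 'I_m}})
  (f : {set 'I_n} -> {set 'I_m}) :
  is_code_morphism C D f ->
  (intersection_complete C -> intersection_complete (code_image C f)) /\
  (max_intersection_complete C -> max_intersection_complete (code_image C f)).
Proof.
move=> f_morph; split.
- exact: image_intersection_complete f_morph.
- exact: image_max_intersection_complete f_morph.
Qed.
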